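(* Let $q\in(0,1]$ and $L>0$. Assume: [A1] there exist $C_L>0$, $\varepsilon_L\in(0,1)$ with $P[\sup_{u\in V_T(r)}\mathbb Z_T(u)\ge\exp(-r^{2-\varepsilon_L})]\le C_L/r^L$ for all $r>0$, $T\in\mathbb T$; [A5] there exists $\lambda>0$ with $\lim_{x\to0}p(x)/|x|^q=\lambda$; [A6] for every $j\in\mathcal J^{(0)}$, $(\xi_T^j)^{-1/q}|\alpha_T^j|^{-1}\to0$ in probability; [A8] for all $M>0$, $\sup_{u\in\mathbb U_T,|u|<M}|\mathbb H_T(\theta^*+a_Tu)-\mathbb H_T(\theta^* )|=O_p(1)$; [A9] for all $M>0$, $\sup_{u,v\in\mathbb U_T,|u|,|v|<M,u\ne v}\frac{|\mathbb H_T(\theta^*+a_Tu)-\mathbb H_T(\theta^*+a_Tv)|}{|u-v|^q}=O_p(1)$. If $\hat u_T=a_T^{-1}(\hat\theta_T-\theta^* )=O_p(1)$, then $\tilde u_T=\tilde a_T^{-1}(\hat\theta_T-\theta^* )=O_p(1)$ as $T\to\infty$.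
   Context: Let $\Theta\subset\mathbb R^{\mathsf p}$ be a bounded open set with closure $\overline\Theta$ and $\theta^*\in\Theta$. Let $(\Omega,\mathcal F,P)$ be a probability space, $\mathbb T\subset\mathbb R_{\ge0}$ with $\sup\mathbb T=\infty$; limits $T\to\infty$ are along $\mathbb T$. For each $T\in\mathbb T$, $\mathbb H_T:\Omega\times\overline\Theta\to\mathbb R$ is a random field continuous in $\theta$ for every $\omega$. The penalty is $p_T(\theta)=\sum_{j=1}^{\mathsf p}\xi_T^jp(\theta_j)$ with (possibly random) $\xi_T^j>0$ and $p:\mathbb R\to\mathbb R_{\ge0}$, $p(0)=0$; $\mathbb H^\dagger_T=\mathbb H_T-p_T$, and $\hat\theta_T:\Omega\to\overline\Theta$ is measurable with $\mathbb H^\dagger_T(\hat\theta_T)=\max_{\overline\Theta}\mathbb H^\dagger_T$. $\mathcal J^{(0)}=\{j:\theta^*_j=0\}$, $\mathcal J^{(1)}=\{j:\theta^*_j\ne0\}$. $a_T=\mathrm{diag}(\alpha_T^1,\dots,\alpha_T^{\mathsf p})$ is deterministic, invertible, with $\|a_T\|\to0$ ($\|\cdot\|$ spectral norm). $\mathbb U_T=\{u:\theta^*+a_Tu\in\overline\Theta\}$, $\mathbb Z_T(u)=\exp(\mathbb H_T(\theta^*+a_Tu)-\mathbb H_T(\theta^* ))$, $V_T(r)=\{u\in\mathbb U_T:|u|\ge r\}$ (supremum over the empty set is $-\infty$). $\tilde a_T$ is diagonal with $(\tilde a_T)_{jj}=(\xi_T^j)^{-1/q}$ for $j\in\mathcal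 J^{(0)}$ and $\alpha_T^j$ for $j\in\mathcal J^{(1)}$. $X_T=O_p(1)$ means tightness: for every $\epsilon>0$ there are $\mathcal T\in\mathbb T$, $M>0$ with $P(|X_T|>M)<\epsilon$ for $T\ge\mathcal T$. *)

From HB Require Import structures.
From mathcomp Require Import all_boot all_order all_algebra.
From mathcomp Require Import all_classical all_reals all_analysis.
Set Implicit Arguments. Unset Strict Implicit. Unset Printing Implicit Defensive.
Import Order.TTheory GRing.Theory Num.Theory.
Import numFieldNormedType.Exports.
Local Open Scope classical_set_scope.
Local Open Scope ring_scope.

Section Defs.
Variables (R : realType) (n : nat).

Definition eucl (u : 'I_n -> R) : R := Num.sqrt (\sum_(j < n) u j ^+ 2).

Definition vdiff (u v : 'I_n -> R) : 'I_n -> R := fun j => u j - v j.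

Definition eopen (O : set ('I_n -> R)) : Prop :=
  forall x, O x -> exists2 e : R, 0 < e & forall y, eucl (vdiff y x) < e -> O y.

Definition ebounded (O : set ('I_n -> R)) : Prop :=
  exists B : R, forall x, O x -> eucl x <= B.

Definition eclosure (O : set ('I_n -> R)) : set ('I_n -> R) :=
  [set x | forall e : R, 0 < e -> exists y, O y /\ eucl (vdiff x y) < e].

Definition econt_on (D : set ('I_n -> R)) (f : ('I_n -> R) -> R) : Prop :=
  forall x, D x -> forall e : R, 0 < e -> exists2 d : R, 0 < d &
    forall y, D y -> eucl (vdiff y x) < d -> `|f y - f x| < e.

Definition along (TT : set R) (Q : R -> Prop) : Prop :=
  exists2 T0, TT T0 & forall T, TT T -> T0 <= T -> Q T.

(** theta* + a_T u, with a_T = diag(alpha_T) *)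
Definition shiftv (thstar : 'I_n -> R) (alpha : R -> 'I_n -> R) (T : R)
  (u : 'I_n -> R) : 'I_n -> R := fun j => thstar j + alpha T j * u j.

Definition UT (Theta : set ('I_n -> R)) thstar alpha T : set ('I_n -> R) :=
  [set u | eclosure Theta (shiftv thstar alpha T u)].

Definition VT Theta thstar alpha T (r : R) : set ('I_n -> R) :=
  [set u | UT Theta thstar alpha T u /\ r <= eucl u].

End Defs.

Section ProbDefs.
Variables (R : realType) (d : measure_display) (Omega : measurableType d)
  (P : probability Omega R).

Definition ZT n (H : R -> Omega -> ('I_n -> R) -> R) thstar alpha T w
  (u : 'I_n -> R) : R :=
  expR (H T w (shiftv thstar alpha T u) - H T w thstar).

Definition OpE1 (TT : set R) (X : R -> Omega -> \bar R) : Prop :=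
  forall eps : R, 0 < eps -> exists M : R, 0 < M /\
    along TT (fun T => (P [set w | (M%:E < `| X T w |)%E] < eps%:E)%E).

Definition Op1 (TT : set R) (X : R -> Omega -> R) : Prop :=
  OpE1 TT (fun T w => (X T w)%:E).

Definition cvg_prob0 (TT : set R) (X : R -> Omega -> R) : Prop :=
  forall eps : R, 0 < eps -> forall eta : R, 0 < eta ->
    along TT (fun T => (P [set w | eps%:E < `| (X T w)%:E |] < eta%:E)%E).

End ProbDefs.

From HB Require Import structures.
From mathcomp Require Import all_boot all_order all_algebra.
From mathcomp Require Import all_classical all_reals all_analysis.
From mathcomp Require Import ring lra measurable_realfun.
Set Implicit Arguments. Unset Strict Implicit. Unset Printing Implicit Defensive.
Import Order.TTheory GRing.Theory Num.Theory.
Import numFieldNormedType.Exports.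
Local Open Scope classical_set_scope.
Local Open Scope ring_scope.

(* Fix M with |u_hat_T| <= M and K bounding the oscillation of H_T on
   {|u| < M + 1}, both with high probability. Let theta0 be theta_hat with its
   J^(0) coordinates set to 0. For T large theta_hat is near theta*, so theta0
   lies in Theta, and maximality of theta_hat gives
     sum_(j in J^(0)) xi_j p(theta_hat_j) <= H(theta_hat) - H(theta0) <= 2K.
   Near 0, [A5] gives p(x) >= lambda/2 |x|^q, hence
   xi_j^(1/q) |theta_hat_j| <= (4K/lambda)^(1/q) for j in J^(0). *)

Section Euclidean.
Variables (R : realType) (n : nat).
Implicit Types (u v : 'I_n -> R) (c e : R).

Lemma eucl_ge0 u : 0 <= eucl u.
Proof. exact: sqrtr_ge0. Qed.

Lemma eucl_sqr u : eucl u ^+ 2 = \sum_(j < n) u j ^+ 2.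
Proof. by rewrite sqr_sqrtr // sumr_ge0 // => j _; rewrite sqr_ge0. Qed.

Lemma eucl0 : eucl (fun _ : 'I_n => 0 : R) = 0.
Proof. by rewrite /eucl big1 ?sqrtr0 // => j _; rewrite expr0n. Qed.

Lemma eucl_cst c : eucl (fun _ : 'I_n => c) = Num.sqrt (n%:R * c ^+ 2).
Proof. by rewrite /eucl sumr_const card_ord mulr_natl. Qed.

Lemma ler_eucl u v : (forall j, `|u j| <= `|v j|) -> eucl u <= eucl v.
Proof.
move=> uv; rewrite ler_sqrt ?sumr_ge0 // => [|j _]; last exact: sqr_ge0.
apply: ler_sum => j _.
by rewrite -[u j ^+ 2]real_normK ?num_real // -[v j ^+ 2]real_normK ?num_real // lerXn2r.
Qed.

Lemma ler_norm_eucl u j : `|u j| <= eucl u.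
Proof.
rewrite -sqrtr_sqr ler_sqrt ?sumr_ge0 // => [|k _]; last exact: sqr_ge0.
by rewrite (bigD1 j) //= lerDl sumr_ge0 // => k _; rewrite sqr_ge0.
Qed.

Lemma eucl_lt_of_coord e : 0 < e ->
  exists2 eta, 0 < eta & forall u, (forall j, `|u j| < eta) -> eucl u < e.
Proof.
move=> e0; have n1 : 0 < n%:R + 1 :> R by rewrite ltr_wpDl.
exists (e / (n%:R + 1)) => [|u ue]; first exact: divr_gt0.
apply: (le_lt_trans (ler_eucl (v := fun=> e / (n%:R + 1)) _)).
  by move=> j; rewrite [X in _ <= X]gtr0_norm ?divr_gt0 ?ltW.
rewrite eucl_cst -[ltRHS]gtr0_norm // -sqrtr_sqr ltr_sqrt ?exprn_gt0 //.
set eta := e / _; have eta0 : 0 < eta by exact: divr_gt0.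
have -> : e = eta * (n%:R + 1) by rewrite mulfVK ?gt_eqF.
have : 0 <= n%:R :> R by []; nra.
Qed.

Lemma eucl_lt_open u M : eucl u < M ->
  exists2 tau, 0 < tau & forall v, (forall j, `|v j - u j| < tau) -> eucl v < M.
Proof.
move=> uM; have M0 : 0 < M := le_lt_trans (eucl_ge0 u) uM.
have N0 : 0 <= n%:R :> R by [].
have D0 : 0 < (n%:R + 1) * (2 * M + 1) by apply: mulr_gt0; lra.
set G := M ^+ 2 - eucl u ^+ 2.
have G0 : 0 < G by rewrite subr_gt0 ltrXn2r ?eucl_ge0 ?ltW.
pose tau := Num.min 1 (G / ((n%:R + 1) * (2 * M + 1))).
have tau0 : 0 < tau by rewrite lt_min ltr01 divr_gt0.
have tau1 : tau <= 1 by rewrite ge_min lexx.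
have tauG : tau * ((n%:R + 1) * (2 * M + 1)) <= G.
  by rewrite -ler_pdivlMr // ge_min lexx orbT.
exists tau => // v vu.
apply: (le_lt_trans (ler_eucl (v := fun j => `|u j| + tau) _)).
  move=> j; rewrite [X in _ <= X]ger0_norm ?addr_ge0 ?(ltW tau0) //.
  by apply/ltW/ltr_distlDr; exact: le_lt_trans (ler_dist_dist _ _) (vu j).
suff : eucl (fun j => `|u j| + tau) ^+ 2 < M ^+ 2.
  by rewrite ltr_pXn2r ?nnegrE ?eucl_ge0 ?ltW.
rewrite eucl_sqr.
have term j : (`|u j| + tau) ^+ 2 <= u j ^+ 2 + tau * (2 * M + 1).
  have uj := le_lt_trans (ler_norm_eucl u j) uM.
  rewrite -[u j ^+ 2]real_normK ?num_real //; have : 0 <= `|u j| by []; nra.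
rewrite (le_lt_trans (ler_sum _ (fun j _ => term j))) // big_split /= -eucl_sqr.
rewrite sumr_const card_ord -mulr_natl -ltrBrDl -/G; nra.
Qed.

Lemma subset_eclosure (S : set ('I_n -> R)) : S `<=` eclosure S.
Proof.
move=> x Sx e e0; exists x; split => //.
by rewrite (_ : vdiff x x = fun=> 0) ?eucl0 //; apply/funext => j; rewrite /vdiff subrr.
Qed.

Lemma ex_pos_lbound (c : 'I_n -> R) : (forall j, 0 < c j) ->
  exists2 g, 0 < g & forall j, g <= c j.
Proof.
move=> c0; have s0 : 0 <= \sum_(j < n) (c j)^-1.
  by apply: sumr_ge0 => j _; rewrite invr_ge0 ltW.
exists (1 + \sum_(j < n) (c j)^-1)^-1 => [|j]; first by rewrite invr_gt0 ltr_pwDl.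
rewrite -[c j]invrK lef_pV2 ?posrE ?invr_gt0 ?ltr_pwDl //.
rewrite (bigD1 j) //= addrCA lerDl addr_ge0 // sumr_ge0 // => k _.
by rewrite invr_ge0 ltW.
Qed.

End Euclidean.

(* Rational points are indexed by the countable type {ffun 'I_n -> rat}. *)
Definition ratv {R : realType} {n} (r : {ffun 'I_n -> rat}) : 'I_n -> R :=
  fun j => ratr (r j).

Lemma ex_rat_near (R : realType) (x c : R) : 0 < c ->
  exists r : rat, `|ratr r - x| < c.
Proof.
move=> c0; have [r] := @rat_in_itvoo R (x - c) (x + c) ltac:(lra).
by rewrite in_itv /= => /andP[xr rx]; exists r; rewrite ltr_norml; apply/andP; split; lra.
Qed.

Lemma eclosure_rat_approx (R : realType) n (S : set ('I_n -> R)) x c :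
  eopen S -> eclosure S x -> 0 < c ->
  exists r, S (ratv r) /\ forall j, `|ratv r j - x j| < c.
Proof.
move=> Sopen Sx c0; have c20 : 0 < c / 2 by exact: divr_gt0.
have [y [Sy xy]] := Sx _ c20.
have [rho rho0 yS] := Sopen _ Sy.
have [eta eta0 eta_rho] := eucl_lt_of_coord n rho0.
have m0 : 0 < Num.min eta (c / 2) by rewrite lt_min eta0.
have /fin_all_exists[r ry] := fun j => ex_rat_near (y j) m0.
exists [ffun j => r j]; split=> [|j].
  apply/yS/eta_rho => j; rewrite /vdiff /ratv ffunE.
  by have := ry j; rewrite lt_min => /andP[].
have := ry j; rewrite /ratv ffunE lt_min => /andP[_ rj].
have yj := le_lt_trans (ler_norm_eucl (vdiff x y) j) xy; rewrite /vdiff in yj.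
by rewrite (le_lt_trans (ler_distD (y j) _ _)) // [c]splitr ltrD // distrC.
Qed.

Lemma econt_on_dist (R : realType) n (D : set ('I_n -> R)) g c :
  econt_on D g -> econt_on D (fun x => `|g x - c|).
Proof.
move=> gD x Dx e e0; have [dl dl0 gx] := gD x Dx e e0.
exists dl => // y Dy yx; rewrite (le_lt_trans (ler_dist_dist _ _)) //.
by rewrite opprB addrA subrK; exact: gx.
Qed.

Section Rescaling.
Variables (R : realType) (n : nat) (thstar : 'I_n -> R) (alpha : R -> 'I_n -> R) (T : R).
Hypothesis alpha_neq0 : forall j, alpha T j != 0.

Definition unshiftv (th : 'I_n -> R) : 'I_n -> R :=
  fun j => (th j - thstar j) / alpha T j.

Lemma unshiftvK th : shiftv thstar alpha T (unshiftv th) = th.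
Proof. by apply/funext => j; rewrite /shiftv /unshiftv mulrC divfK // addrC subrK. Qed.

Lemma shiftv0 : shiftv thstar alpha T (fun=> 0) = thstar.
Proof. by apply/funext => j; rewrite /shiftv mulr0 addr0. Qed.

Lemma unshiftv_sub th u j :
  unshiftv th j - u j = (th j - shiftv thstar alpha T u j) / alpha T j.
Proof. by rewrite /unshiftv /shiftv; field; exact: alpha_neq0. Qed.

Variables (Theta : set ('I_n -> R)) (Theta_open : eopen Theta).

Lemma rat_point_gt g M K u : econt_on (eclosure Theta) g ->
  UT Theta thstar alpha T u -> eucl u < M -> K < g (shiftv thstar alpha T u) ->
  exists r, [/\ Theta (ratv r), eucl (unshiftv (ratv r)) < M & K < g (ratv r)].
Proof.
move=> gcont Uu uM Ku; set th := shiftv _ _ _ u in Uu Ku.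
have [dl dl0 gth] := gcont _ Uu (g th - K) ltac:(by rewrite subr_gt0).
have [eta eta0 eta_dl] := eucl_lt_of_coord n dl0.
have [tau tau0 tauM] := eucl_lt_open uM.
pose c j := Num.min eta (tau * `|alpha T j|).
have [g1 g10 g1c] : exists2 g1, 0 < g1 & forall j, g1 <= c j.
  by apply: ex_pos_lbound => j; rewrite lt_min eta0 mulr_gt0 ?normr_gt0.
have [r [Tr rth]] := eclosure_rat_approx Theta_open Uu g10.
have rc j : `|ratv r j - th j| < c j := lt_le_trans (rth j) (g1c j).
exists r; split => //.
  apply: tauM => j; rewrite unshiftv_sub normrM normfV ltr_pdivrMr ?normr_gt0 //.
  by have := rc j; rewrite lt_min => /andP[].
have : `|g (ratv r) - g th| < g th - K.
  apply: gth; first exact: subset_eclosure.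
  by apply: eta_dl => j; have := rc j; rewrite lt_min => /andP[].
rewrite ltr_norml => /andP[+ _]; lra.
Qed.

End Rescaling.

Section Measurability.
Variables (R : realType) (d : measure_display) (Omega : measurableType d).

Lemma measurable_gt (X : Omega -> R) K : measurable_fun setT X ->
  measurable [set w | K < X w].
Proof.
move=> mX; rewrite -[X in measurable X]setTI.
rewrite (_ : [set w | K < X w] = X @^-1` `]K, +oo[); first exact: mX.
by apply/seteqP; split => w; rewrite /= in_itv /= andbT.
Qed.

Lemma measurable_abse_gt (X : Omega -> R) K : measurable_fun setT X ->
  measurable [set w | (K%:E < `|(X w)%:E|)%E].
Proof.
move=> mX; rewrite (_ : [set w | _] = [set w | K < `|X w|]).
  exact/measurable_gt/measurableT_comp.
by apply/seteqP; split => w; rewrite /= lte_fin.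
Qed.

Lemma measurable_fun_eucl n (X : Omega -> 'I_n -> R) :
  (forall j, measurable_fun setT (X ^~ j)) ->
  measurable_fun setT (fun w => eucl (X w)).
Proof.
move=> mX.
rewrite (_ : (fun w => _) = Num.sqrt \o (fun w => \sum_(j < n) X w j ^+ 2)) //.
apply: measurableT_comp; first exact: continuous_measurable_fun (@sqrt_continuous R).
by apply: measurable_sum => j; exact: measurable_funX.
Qed.

Variables (n : nat) (Theta : set ('I_n -> R)) (thstar : 'I_n -> R)
  (alpha : R -> 'I_n -> R) (T : R) (f : Omega -> ('I_n -> R) -> R).
Hypotheses (Theta_open : eopen Theta) (Theta_thstar : Theta thstar)
  (alpha_neq0 : forall j, alpha T j != 0)
  (f_ge0 : forall w th, 0 <= f w th)
  (f_meas : forall th, eclosure Theta th -> measurable_fun setT (f ^~ th))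
  (f_cont : forall w, econt_on (eclosure Theta) (f w)).

(* By continuity of f and openness of Theta the supremum can be taken over
   rational points, which turns the event into a countable union. *)
Lemma measurable_sup_gt (M K : R) : 0 < M ->
  measurable [set w | (K%:E < `|ereal_sup
    [set (f w (shiftv thstar alpha T u))%:E
    | u in [set u | UT Theta thstar alpha T u /\ (eucl u < M)%R]]|)%E].
Proof.
move=> M0; pose D r := Theta (ratv r) /\ eucl (unshiftv thstar alpha T (ratv r)) < M.
rewrite (_ : [set w | _] = \bigcup_r [set w | D r /\ K < f w (ratv r)]).
  apply: countable_bigcupT_measurable => [|r]; first exact: countableP.
  have [Dr|nDr] := pselect (D r); last first.
    by rewrite (_ : [set w | _] = set0) //; apply/seteqP; split => w // [].
  rewrite (_ : [set w | _] = [set w | K < f w (ratv r)]).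
    exact/measurable_gt/f_meas/subset_eclosure/Dr.1.
  by apply/seteqP; split => [w [] //|w Kw]; split.
apply/seteqP; split => w /=.
  have sup_ge0 : (0 <= ereal_sup [set (f w (shiftv thstar alpha T u))%:E
      | u in [set u | UT Theta thstar alpha T u /\ (eucl u < M)%R]])%E.
    apply: le_trans (ereal_sup_ubound _); last first.
      exists (fun=> 0) => //; rewrite /UT /= eucl0 shiftv0.
      by split => //; exact: subset_eclosure.
    by rewrite lee_fin.
  rewrite gee0_abs // => /ereal_sup_gt[_ [u [Uu uM] <-]]; rewrite lte_fin => Ku.
  have [r [Tr rM Kr]] := rat_point_gt alpha_neq0 Theta_open (f_cont w) Uu uM Ku.
  by exists r.
move=> [r _ [[Tr rM] Kr]]; apply: lt_le_trans (lee_abs _).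
apply: (@lt_le_trans _ _ (f w (ratv r))%:E); first by rewrite lte_fin.
apply: ereal_sup_ubound; exists (unshiftv thstar alpha T (ratv r)).
  by split => //; rewrite /UT /= unshiftvK //; exact: subset_eclosure.
by rewrite unshiftvK.
Qed.

End Measurability.

Definition zero_coords (R : zmodType) n (J : pred 'I_n) (th : 'I_n -> R) : 'I_n -> R :=
  fun j => if J j then 0 else th j.

Lemma penalty_le_of_argmax (R : realFieldType) n (J : pred 'I_n) (h : ('I_n -> R) -> R)
    (pen : R -> R) (xi th : 'I_n -> R) : pen 0 = 0 ->
  h (zero_coords J th) - \sum_(j < n) xi j * pen (zero_coords J th j)
    <= h th - \sum_(j < n) xi j * pen (th j) ->
  \sum_(j < n | J j) xi j * pen (th j) <= h th - h (zero_coords J th).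
Proof.
move=> pen0; rewrite [X in _ - X <= _](bigID J) [X in _ <= _ - X](bigID J) /=.
rewrite big1 => [|j Jj]; last by rewrite /zero_coords Jj pen0 mulr0.
rewrite (eq_bigr (fun j => xi j * pen (th j))) => [|j /negbTE nJj]; last first.
  by rewrite /zero_coords nJj.
lra.
Qed.

Lemma powR_mul_le (R : realType) (q a x B : R) : 0 < q -> 0 <= a -> 0 < x ->
  a `^ q * x <= B -> a * x `^ q^-1 <= B `^ q^-1.
Proof.
move=> q0 a0 x0 axB; have ax0 : 0 <= a `^ q * x by rewrite mulr_ge0 ?powR_ge0 ?ltW.
have -> : a = (a `^ q) `^ q^-1 by rewrite -powRrM divff ?gt_eqF // powRr1.
rewrite -powRM ?powR_ge0 ?(ltW x0) //.
have q_inv_ge0 : 0 <= q^-1 by rewrite invr_ge0 ltW.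
by apply: ge0_ler_powR (axB); rewrite // nnegrE (le_trans ax0 axB).
Qed.

Lemma ex_pen_lbound (R : realType) (pen : R -> R) (q lam : R) : 0 < lam ->
  (fun x => pen x / `|x| `^ q) @ 0^' --> lam ->
  exists2 delta, 0 < delta & forall x, 0 < `|x| < delta -> lam / 2 * `|x| `^ q < pen x.
Proof.
move=> lam0 pen_lim; have lam2 : lam / 2 < lam by lra.
have /(_ (dnbhs_filter _)) := @cvgr_gt _ _ _ _ _ lam pen_lim _ lam2.
rewrite near_withinE => /nbhs_ballP[dl dl0 near0].
exists dl => // x /andP[x0 xdl].
have /near0 : ball (0 : R) dl x by rewrite /ball /= sub0r normrN.
by rewrite -normr_gt0 => /(_ x0); rewrite ltr_pdivlMr // powR_gt0.
Qed.

Section PenalizedEstimator.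
Variables (R : realType) (n : nat) (Theta : set ('I_n -> R)) (thstar : 'I_n -> R)
  (alpha : R -> 'I_n -> R) (T : R) (h : ('I_n -> R) -> R) (pen : R -> R)
  (xi th : 'I_n -> R) (q lam delta rho K M : R).
Hypotheses (pen0 : pen 0 = 0) (pen_ge0 : forall x, 0 <= pen x)
  (xi_gt0 : forall j, 0 < xi j) (th_cl : eclosure Theta th)
  (th_max : forall th', eclosure Theta th' ->
    h th' - \sum_(j < n) xi j * pen (th' j) <= h th - \sum_(j < n) xi j * pen (th j))
  (alpha_neq0 : forall j, alpha T j != 0)
  (q_gt0 : 0 < q) (lam_gt0 : 0 < lam) (M_ge0 : 0 <= M)
  (pen_lb : forall x, 0 < `|x| < delta -> lam / 2 * `|x| `^ q < pen x)
  (ball_Theta : forall y, (forall j, `|y j - thstar j| < rho) -> Theta y)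
  (alpha_small : forall j, `|alpha T j| < Num.min delta rho / (M + 1))
  (uhat_le : eucl (unshiftv thstar alpha T th) <= M)
  (h_osc : forall u, UT Theta thstar alpha T u -> eucl u < M + 1 ->
    `|h (shiftv thstar alpha T u) - h thstar| <= K).

Let J j := thstar j == 0.
Let th0 := zero_coords J th.

Lemma th_near j : `|th j - thstar j| < Num.min delta rho.
Proof.
have M10 : 0 < M + 1 by have := M_ge0; lra.
rewrite -(unshiftvK thstar alpha_neq0 th) /shiftv addrC addKr normrM.
have uj := le_trans (ler_norm_eucl _ j) uhat_le.
have := alpha_small j; rewrite ltr_pdivlMr // => aj.
by apply: le_lt_trans aj; rewrite ler_wpM2l //; lra.
Qed.

Lemma Theta_th0 : Theta th0.
Proof.
apply: ball_Theta => j; have := th_near j; rewrite lt_min => /andP[_ th_rho].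
rewrite /th0 /zero_coords /J; case: eqP => [->|//].
by rewrite subrr normr0 (le_lt_trans _ th_rho).
Qed.

Lemma h_osc_at x : eclosure Theta x -> eucl (unshiftv thstar alpha T x) <= M ->
  `|h x - h thstar| <= K.
Proof.
move=> x_cl xM; rewrite -{1}(unshiftvK thstar alpha_neq0 x).
by apply: h_osc; [rewrite /UT /= unshiftvK | lra].
Qed.

Lemma sum_pen_zero_le : \sum_(j < n | J j) xi j * pen (th j) <= 2 * K.
Proof.
have th0_cl := subset_eclosure Theta_th0.
have := penalty_le_of_argmax pen0 (th_max th0_cl).
have := h_osc_at th_cl uhat_le.
have : `|h th0 - h thstar| <= K.
  apply: h_osc_at th0_cl (le_trans (ler_eucl _) uhat_le) => j.
  rewrite /unshiftv /th0 /zero_coords /J; case: eqP => [->|//].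
  by rewrite subrr mul0r normr0.
rewrite -/th0 !ler_norml => /andP[? ?] /andP[? ?]; lra.
Qed.

Lemma zero_coord_le j : thstar j = 0 ->
  `|th j| * xi j `^ q^-1 <= (4 * K / lam) `^ q^-1.
Proof.
move=> thj0; have xi_pen : xi j * pen (th j) <= 2 * K.
  apply: le_trans sum_pen_zero_le; rewrite (bigD1 j) /J ?thj0 //= lerDl.
  by apply: sumr_ge0 => k _; rewrite mulr_ge0 ?pen_ge0 // ltW.
have [->|th_neq0] := eqVneq (th j) 0; first by rewrite normr0 mul0r powR_ge0.
apply: powR_mul_le => //; rewrite ler_pdivlMr //.
have := th_near j; rewrite thj0 subr0 lt_min => /andP[th_delta _].
have := pen_lb (x := th j); rewrite normr_gt0 th_neq0 th_delta => /(_ isT) pen_gt.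
have := xi_gt0 j; nra.
Qed.

Lemma eucl_tilde_le : eucl (fun j =>
     if thstar j == 0 then (th j - thstar j) * xi j `^ q^-1
     else (th j - thstar j) / alpha T j)
  <= Num.sqrt (n%:R * Num.max M ((4 * K / lam) `^ q^-1) ^+ 2).
Proof.
rewrite -eucl_cst; apply: ler_eucl => j.
rewrite [X in _ <= X]ger0_norm ?le_max ?M_ge0 //.
case: eqP => [thj0|_].
  by rewrite thj0 subr0 normrM (ger0_norm (powR_ge0 _ _)) zero_coord_le ?orbT.
by rewrite (le_trans (ler_norm_eucl (unshiftv thstar alpha T th) j)).
Qed.

End PenalizedEstimator.

Lemma along_and (R : realType) (TT : set R) (P Q : R -> Prop) :
  along TT P -> along TT Q -> along TT (fun T => P T /\ Q T).
Proof.
move=> [T1 TT1 P1] [T2 TT2 Q2]; have [T12|T21] := leP T1 T2.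
  by exists T2 => // T TT_T T2T; split; [apply: P1 (le_trans T12 T2T) | apply: Q2].
by exists T1 => // T TT_T T1T; split; [apply: P1 | apply: Q2 (le_trans (ltW T21) T1T)].
Qed.

Lemma measure_lt_of_subU (R : realType) d (Omega : measurableType d)
    (mu : {measure set Omega -> \bar R}) (A S E : set Omega) (a b : R) :
  measurable A -> measurable S -> measurable E -> E `<=` A `|` S ->
  (mu A < a%:E)%E -> (mu S < b%:E)%E -> (mu E < (a + b)%:E)%E.
Proof.
move=> mA mS mE EAS muA muS; rewrite EFinD.
apply: le_lt_trans (lteD muA muS).
apply: le_trans (measureU2 mu mA mS).
by apply: le_measure; rewrite ?inE //; exact: measurableU.
Qed.

Lemma abse_eucl_gtE (R : realType) n (u : 'I_n -> R) (B : R) :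
  (B%:E < `|(eucl u)%:E|)%E = (B < eucl u).
Proof. by rewrite abse_EFin lte_fin ger0_norm ?eucl_ge0. Qed.

Lemma le_of_not_abse_sup_gt (R : realType) (U : Type) (D : set U) (g : U -> R)
    (K : R) :
  ~ (K%:E < `|ereal_sup [set (g u)%:E | u in D]|)%E -> forall u, D u -> g u <= K.
Proof.
move=> /negP; rewrite -leNgt => supK u Du; rewrite -lee_fin.
apply: le_trans supK; apply: le_trans (lee_abs _).
by apply: ereal_sup_ubound; exists u.
Qed.

Theorem theorem3
  (R : realType) (n : nat)
  (Theta : set ('I_n -> R)) (thstar : 'I_n -> R)
  (d : measure_display) (Omega : measurableType d) (P : probability Omega R)
  (TT : set R)
  (H : R -> Omega -> ('I_n -> R) -> R)
  (pen : R -> R) (xi : R -> Omega -> 'I_n -> R)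
  (thhat : R -> Omega -> 'I_n -> R)
  (alpha : R -> 'I_n -> R)
  (q L : R)
  (* Theta bounded open, theta* in Theta *)
  (HTheta_open : eopen Theta) (HTheta_bdd : ebounded Theta)
  (Hthstar : Theta thstar)
  (* index set TT in [0, oo) with sup TT = oo *)
  (HTT_nonneg : forall T, TT T -> 0 <= T)
  (HTT_unbdd : forall M : R, exists2 T, TT T & M <= T)
  (* random field: measurable in omega, continuous on the closure in theta *)
  (HH_meas : forall T theta, TT T -> eclosure Theta theta ->
      measurable_fun setT (fun w => H T w theta))
  (HH_cont : forall T w, TT T -> econt_on (eclosure Theta) (H T w))
  (* penalty *)
  (Hpen_nonneg : forall x, 0 <= pen x) (Hpen0 : pen 0 = 0)
  (Hxi_pos : forall T w j, TT T -> 0 < xi T w j)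
  (Hxi_meas : forall T j, TT T -> measurable_fun setT (fun w => xi T w j))
  (* the penalized estimator: measurable maximizer over the closure *)
  (Hthhat_meas : forall T j, TT T -> measurable_fun setT (fun w => thhat T w j))
  (Hthhat_in : forall T w, TT T -> eclosure Theta (thhat T w))
  (Hthhat_max : forall T w theta, TT T -> eclosure Theta theta ->
      H T w theta - \sum_(j < n) xi T w j * pen (theta j)
      <= H T w (thhat T w) - \sum_(j < n) xi T w j * pen (thhat T w j))
  (* a_T = diag(alpha_T) deterministic, invertible, ||a_T|| -> 0 *)
  (Halpha_nz : forall T j, TT T -> alpha T j != 0)
  (Halpha_0 : forall e : R, 0 < e ->
      along TT (fun T => forall j, `|alpha T j| < e))
  (Hq : 0 < q <= 1) (HL : 0 < L)
  (* [A1] *)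
  (HA1 : exists CL epsL : R, 0 < CL /\ 0 < epsL < 1 /\
     forall r : R, 0 < r -> forall T, TT T ->
       (P [set w | (expR (- r `^ (2 - epsL)))%:E <=
            ereal_sup [set (ZT H thstar alpha T w u)%:E
                      | u in VT Theta thstar alpha T r] ]
        <= (CL / r `^ L)%:E)%E)
  (* [A5] *)
  (HA5 : exists2 lam : R, 0 < lam &
     (fun x : R => pen x / `|x| `^ q) @ 0^' --> lam)
  (* [A6] *)
  (HA6 : forall j, thstar j = 0 ->
     cvg_prob0 P TT (fun T w => xi T w j `^ (- q^-1) * `|alpha T j|^-1))
  (* [A8] *)
  (HA8 : forall M : R, 0 < M ->
     OpE1 P TT (fun T w => ereal_sup
       [set (`|H T w (shiftv thstar alpha T u) - H T w thstar|)%:E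
       | u in [set u | UT Theta thstar alpha T u /\ eucl u < M]]))
  (* [A9] *)
  (HA9 : forall M : R, 0 < M ->
     OpE1 P TT (fun T w => ereal_sup
       [set (`|H T w (shiftv thstar alpha T uv.1) - H T w (shiftv thstar alpha T uv.2)|
             / eucl (vdiff uv.1 uv.2) `^ q)%:E
       | uv in [set uv : ('I_n -> R) * ('I_n -> R) |
           [/\ UT Theta thstar alpha T uv.1, UT Theta thstar alpha T uv.2,
               eucl uv.1 < M, eucl uv.2 < M & uv.1 <> uv.2]]])) :
  (* if hat u_T = a_T^{-1}(hat theta_T - theta* ) is O_p(1) ... *)
  Op1 P TT (fun T w => eucl (fun j => (thhat T w j - thstar j) / alpha T j)) ->
  (* ... then tilde u_T = tilde a_T^{-1}(hat theta_T - theta* ) is O_p(1) *)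
  Op1 P TT (fun T w => eucl (fun j =>
     if thstar j == 0 then (thhat T w j - thstar j) * xi T w j `^ q^-1
     else (thhat T w j - thstar j) / alpha T j)).
Proof.
move=> uhat_tight eps eps0; have eps20 : 0 < eps / 2 by exact: divr_gt0.
have [M [M0 uhatM]] := uhat_tight _ eps20.
have M10 : 0 < M + 1 by lra.
have [K [K0 oscK]] := HA8 _ M10 _ eps20.
have [lam lam0 /(ex_pen_lbound lam0)[dpen dpen0 pen_lb]] := HA5.
have [rho rho0 rho_Theta] := HTheta_open _ Hthstar.
have [eta eta0 eta_rho] := eucl_lt_of_coord n rho0.
have delta_pos : 0 < Num.min dpen eta / (M + 1) by rewrite divr_gt0 // lt_min dpen0.
exists (Num.sqrt (n%:R * Num.max M ((4 * K / lam) `^ q^-1) ^+ 2) + 1).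
split; first by rewrite ltr_wpDl ?sqrtr_ge0.
have [T0 TT0 T0_ev] := along_and (along_and uhatM oscK) (Halpha_0 _ delta_pos).
exists T0 => // T TT_T T0T; have [[uhatP oscP] alphaT] := T0_ev T TT_T T0T.
have m_diff j : measurable_fun setT (fun w => thhat T w j - thstar j).
  by apply: measurable_funB; [exact: Hthhat_meas | exact: measurable_cst].
rewrite [eps]splitr; apply: measure_lt_of_subU uhatP oscP.
- by apply/measurable_abse_gt/measurable_fun_eucl => j; exact: measurable_funM.
- apply: (measurable_sup_gt (f := fun w th => `|H T w th - H T w thstar|)) => //.
  - by move=> j; exact: Halpha_nz.
  - move=> th th_cl; apply: measurableT_comp (measurable_funB _ _) => //.
    + exact: HH_meas.
    + exact: HH_meas (subset_eclosure Hthstar).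
  - by move=> w; apply: econt_on_dist; exact: HH_cont.
- apply/measurable_abse_gt/measurable_fun_eucl => j; case: eqP => _.
    exact/measurable_funM/(measurableT_comp (measurable_powR _))/Hxi_meas.
  exact: measurable_funM.
- move=> w; rewrite /= !abse_eucl_gtE => Ew; apply: contrapT => /not_orP[].
  move=> /negP; rewrite -leNgt => uhat_le /le_of_not_abse_sup_gt osc_le.
  move: Ew; apply/negP; rewrite -leNgt ler_wpDr //.
  have q0 : 0 < q by case/andP: Hq.
  apply: (eucl_tilde_le Hpen0 Hpen_nonneg (fun j => Hxi_pos T w j TT_T)
    (Hthhat_in T w TT_T) (fun th => Hthhat_max T w th TT_T)
    (fun j => Halpha_nz T j TT_T) q0 lam0 (ltW M0) pen_lb _ alphaT uhat_le).
  - by move=> y /eta_rho/rho_Theta.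
  - by move=> u Uu uM; exact: osc_le.
Qed.
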